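(* Let $\mathcal{M}^{(N)}$ be a symmetric weakly coupled MDP (WCMDP) with discount factor $\gamma\in[0,1)$. Let $\Pi^*_{\mathbf{1}/N,\mathrm{PI}}$ denote the set of stationary Markov policies that are permutation invariant and that maximize the utilitarian objective $\mathrm{GGF}_{\mathbf{1}/N}[\mathbf{V}_0^{\pi}]=\frac1N\sum_{n=1}^N V^{\pi}_{0,n}$ over all stationary Markov policies $\pi$. Then $\Pi^*_{\mathbf{1}/N,\mathrm{PI}}$ is non-empty, and every $\pi^*\in\Pi^*_{\mathbf{1}/N,\mathrm{PI}}$ satisfies \[ \mathrm{GGF}_{\mathbf{w}}\big[\mathbf{V}_0^{\pi^*}\big]=\max_{\pi}\mathrm{GGF}_{\mathbf{w}}\big[\mathbf{V}_0^{\pi}\big] \] for every weight vector $\mathbf{w}=(w_1,\dots,w_N)$ in the probability simplex with $w_1\ge w_2\ge\cdots\ge w_N$, where the maximum is over all stationary Markov policies.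
   Context: A WCMDP consists of $N$ sub-MDPs $n\in[N]$, each with finite state set $\mathcal{S}_n$, finite action set $\mathcal{A}_n$, transition kernel $p_n(s'|s,a)$ and reward $r_n(s,a)\in\mathbb{R}$. The joint state space is $\mathcal{S}^{(N)}=\prod_n\mathcal{S}_n$; the joint feasible action set is $\mathcal{A}^{(N)}=\{(a_1,\dots,a_N): a_n\in\mathcal{A}_n,\ \sum_{n=1}^N d_{k,n}(a_n)\le b_k\ \forall k\in[K]\}$ with $d_{k,n}\ge 0$, $b_k\ge0$, and an idle action consuming no resource so this set is non-empty. Joint transitions are $P^{(N)}(\mathbf{s}'|\mathbf{s},\mathbf{a})=\prod_{n}p_n(s'_n|s_n,a_n)$ and the vector reward is $\mathbf{r}(\mathbf{s},\mathbf{a})=(r_1(s_1,a_1),\dots,r_N(s_N,a_N))$. The initial joint state is drawn from a distribution $\boldsymbol{\mu}$ on $\mathcal{S}^{(N)}$. A stationary Markov policy $\pi$ gives probabilities $\pi(\mathbf{s},\mathbf{a})$ over $\mathbf{a}\in\mathcal{A}^{(N)}$ for each $\mathbf{s}$. The value vector is $\mathbf{V}_0^{\pi}=\mathbb{E}_{\pi}\big[\sum_{t\ge0}\gamma^t\mathbf{r}(\mathbf{s}_t,\mathbf{a}_t)\,\big|\,\mathbf{s}_0\sim\boldsymbol{\mu}\big]\in\mathbb{R}^N$, with components $V^{\pi}_{0,n}$. Permutations: for a permutation $\sigma$ of $[N]$, the permutation operator $Q$ acts on any $N$-tuple $\mathbf{v}$ by $(Q\mathbf{v})_n=v_{\sigma(n)}$;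 it acts in the same way on joint states and joint actions. $\mathcal{G}^N$ denotes the set of all $N!$ such operators. The WCMDP is symmetric if: (1) all sub-MDPs are identical ($\mathcal{S}_n=\mathcal{S}$, $\mathcal{A}_n=\mathcal{A}$, $p_n=p$, $r_n=r$ for all $n$); (2) resource consumption is symmetric ($d_{k,n}=d_k$ for all $n$); (3) $\boldsymbol{\mu}(\mathbf{s}_0)=\boldsymbol{\mu}(Q\mathbf{s}_0)$ for all $\mathbf{s}_0$ and all $Q\in\mathcal{G}^N$. A stationary Markov policy $\pi$ is permutation invariant if $\pi(\mathbf{s},\mathbf{a})=\pi(Q\mathbf{s},Q\mathbf{a})$ for all $Q\in\mathcal{G}^N$, $\mathbf{s}$, $\mathbf{a}$. Generalized Gini function: for $\mathbf{v}\in\mathbb{R}^N$ and weights $\mathbf{w}$ in the probability simplex with $w_1\ge\dots\ge w_N$, $\mathrm{GGF}_{\mathbf{w}}[\mathbf{v}]=\min_{\sigma}\sum_{n=1}^N w_n v_{\sigma(n)}$, the minimum over all permutations $\sigma$ of $[N]$. The utilitarian case is $\mathbf{w}=\mathbf{1}/N$, giving $\mathrm{GGF}_{\mathbf{1}/N}[\mathbf{v}]=\frac1N\sum_n v_n$. *)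

From HB Require Import structures.
From mathcomp Require Import all_boot all_order all_algebra all_fingroup.
From mathcomp Require Import all_classical all_reals all_analysis.
Set Implicit Arguments. Unset Strict Implicit. Unset Printing Implicit Defensive.
Import Order.TTheory GRing.Theory Num.Theory.
Local Open Scope ring_scope.

(* Symmetric WCMDP: N identical sub-MDPs with state type S, action type A,
   kernel p s a s', reward r s a; K resources, consumption d k a, budgets b k. *)

Definition jstate (N : nat) (S : finType) := {ffun 'I_N -> S}.
Definition jaction (N : nat) (A : finType) := {ffun 'I_N -> A}.

Definition feasible {R : realType} {N K : nat} {A : finType}
  (d : 'I_K -> A -> R) (b : 'I_K -> R) (a : jaction N A) : bool :=
  [forall k, \sum_(n < N) d k (a n) <= b k].

Definition is_policy {R : realType} {N K : nat} {S A : finType}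
  (d : 'I_K -> A -> R) (b : 'I_K -> R)
  (pi : jstate N S -> jaction N A -> R) : Prop :=
  (forall s a, 0 <= pi s a) /\
  (forall s a, ~~ feasible d b a -> pi s a = 0) /\
  (forall s, \sum_(a : jaction N A) pi s a = 1).

Definition jtrans {R : realType} {N : nat} {S A : finType}
  (p : S -> A -> S -> R) (s : jstate N S) (a : jaction N A) (s' : jstate N S) : R :=
  \prod_(n < N) p (s n) (a n) (s' n).

Fixpoint state_dist {R : realType} {N : nat} {S A : finType}
  (p : S -> A -> S -> R) (mu : jstate N S -> R)
  (pi : jstate N S -> jaction N A -> R) (t : nat) : jstate N S -> R :=
  match t with
  | 0 => mu
  | t'.+1 => fun s' => \sum_(s : jstate N S) \sum_(a : jaction N A)
               state_dist p mu pi t' s * pi s a * jtrans p s a s'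
  end.

Definition exp_reward {R : realType} {N : nat} {S A : finType}
  (p : S -> A -> S -> R) (r : S -> A -> R) (mu : jstate N S -> R)
  (pi : jstate N S -> jaction N A -> R) (t : nat) (n : 'I_N) : R :=
  \sum_(s : jstate N S) \sum_(a : jaction N A)
     state_dist p mu pi t s * pi s a * r (s n) (a n).

Definition value {R : realType} {N : nat} {S A : finType}
  (p : S -> A -> S -> R) (r : S -> A -> R) (mu : jstate N S -> R)
  (gamma : R) (pi : jstate N S -> jaction N A -> R) (n : 'I_N) : R :=
  limn (fun T : nat => \sum_(0 <= t < T) gamma ^+ t * exp_reward p r mu pi t n).

Definition permQ {N : nat} {T : Type} (sigma : 'S_N) (v : 'I_N -> T) : {ffun 'I_N -> T} :=
  [ffun n => v (sigma n)].

Definition perm_invariant {R : realType} {N : nat} {S A : finType}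
  (pi : jstate N S -> jaction N A -> R) : Prop :=
  forall (sigma : 'S_N) s a, pi s a = pi (permQ sigma s) (permQ sigma a).

Definition gini_weights {R : realType} {N : nat} (w : 'I_N -> R) : Prop :=
  (forall n, 0 <= w n) /\ \sum_(n < N) w n = 1 /\
  (forall i j : 'I_N, (i <= j)%N -> w j <= w i).

Definition GGF {R : realType} {N : nat} (w : 'I_N -> R) (v : 'I_N -> R) : R :=
  let f := fun sigma : 'S_N => \sum_(n < N) w n * v (sigma n) in
  \big[Num.min/f 1%g]_(sigma : 'S_N) f sigma.

Definition utilitarian {R : realType} (N : nat) : 'I_N -> R := fun _ => N%:R^-1.

From HB Require Import structures.
From mathcomp Require Import all_boot all_order all_algebra all_fingroup.
From mathcomp Require Import all_classical all_reals all_analysis.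
Import Order.TTheory GRing.Theory Num.Theory.
Import numFieldNormedType.Exports.
Local Open Scope classical_set_scope.
Local Open Scope ring_scope.
Set Implicit Arguments. Unset Strict Implicit. Unset Printing Implicit Defensive.

(* For the utilitarian weights the vector reward collapses to the average reward,
   so the problem is a single discounted MDP on joint states. Its Bellman
   optimality equation has a solution (the value of a deterministic policy
   maximizing the total value cannot be improved by a one-state change), the
   solution is unique, and so it is invariant under permuting the sub-MDPs;
   playing uniformly among its greedy actions is then an optimal
   permutation-invariant policy.
   Conversely, a permutation-invariant policy started from a symmetric initial
   distribution gives every sub-MDP the same value c. Averaging over all
   permutations shows that GGF_w of any vector is at most its mean, hence
   GGF_w (V pi) <= mean (V pi) <= mean (V pistar) = c = GGF_w (V pistar). *)

Lemma ler_sum_term (R : numDomainType) (I : finType) (F : I -> R) i0 :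
  (forall i, 0 <= F i) -> F i0 <= \sum_i F i.
Proof. by move=> F_ge0; rewrite (bigD1 i0) //= lerDl sumr_ge0. Qed.

Lemma sum_eq_ind (R : pzSemiRingType) (T : finType) (F : T -> R) t0 :
  \sum_t (t == t0)%:R * F t = F t0.
Proof.
rewrite (bigD1 t0) //= eqxx mul1r big1 ?addr0 // => t /negbTE ->.
by rewrite mul0r.
Qed.

(* Maximum principle: evaluate the hypothesis at a point where [u] is maximal. *)
Lemma le0_of_subinvariant (R : realFieldType) (X : finType) (gamma : R)
    (P : X -> X -> R) (u : X -> R) :
  0 <= gamma < 1 -> (forall x y, 0 <= P x y) -> (forall x, \sum_y P x y = 1) ->
  (forall x, u x <= gamma * \sum_y P x y * u y) -> forall x, u x <= 0.
Proof.
move=> /andP[g0 g1] P_ge0 P_sum1 u_sub x.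
case: (arg_maxP u (P:=predT) (i0:=x) isT) => x0 _ u_max.
apply: le_trans (u_max x isT) _.
have mean_le : \sum_y P x0 y * u y <= u x0.
  rewrite -[X in _ <= X]mul1r -(P_sum1 x0) mulr_suml.
  by apply: ler_sum => y _; apply: ler_wpM2l => //; exact: u_max.
rewrite leNgt; apply/negP => u_gt0.
have : u x0 <= gamma * u x0 by apply: le_trans (u_sub x0) _; exact: ler_wpM2l.
by rewrite -subr_ge0 -{2}[u x0]mul1r -mulrBl pmulr_lge0 // subr_ge0 leNgt g1.
Qed.

Section GGF.
Variables (R : realType) (N : nat).
Implicit Types (w v : 'I_N -> R).

Lemma gt0_of_sum_eq1 w : \sum_n w n = 1 -> (0 < N)%N.
Proof. by case: N w => [|//] w; rewrite big_ord0 => /eqP; rewrite eq_sym oner_eq0. Qed.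

Lemma sum_utilitarian : (0 < N)%N -> \sum_n @utilitarian R N n = 1.
Proof.
move=> N_gt0; rewrite /utilitarian sumr_const card_ord -[_^-1 *+ _]mulr_natl.
by rewrite mulfV // pnatr_eq0 -lt0n.
Qed.

Lemma GGF_le w v (sigma : 'S_N) : GGF w v <= \sum_n w n * v (sigma n).
Proof. exact: bigmin_le. Qed.

Lemma GGF_perm_invariant w v c :
  (forall sigma : 'S_N, \sum_n w n * v (sigma n) = c) -> GGF w v = c.
Proof. by move=> hc; rewrite /GGF /= hc; apply: bigmin_eq_id => sigma _; rewrite hc. Qed.

Lemma GGF_utilitarian v : GGF (@utilitarian R N) v = N%:R^-1 * \sum_n v n.
Proof.
apply: GGF_perm_invariant => sigma.
rewrite /utilitarian -mulr_sumr.
by congr (_ * _); rewrite [RHS](reindex_perm sigma).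
Qed.

Lemma GGF_cst w v c : \sum_n w n = 1 -> (forall n, v n = c) -> GGF w v = c.
Proof.
move=> w1 vc; apply: GGF_perm_invariant => sigma.
by under eq_bigr do rewrite vc; rewrite -mulr_suml w1 mul1r.
Qed.

Lemma sum_perm_at v (n : 'I_N) :
  N%:R * \sum_(sigma : 'S_N) v (sigma n) = #|'S_N|%:R * \sum_m v m.
Proof.
have indep m : \sum_(sigma : 'S_N) v (sigma m) = \sum_(sigma : 'S_N) v (sigma n).
  rewrite (reindex_inj (mulgI (tperm m n))) /=.
  by apply: eq_bigr => sigma _; rewrite permM tpermL.
transitivity (\sum_(m < N) \sum_(sigma : 'S_N) v (sigma m)).
  by under [RHS]eq_bigr do rewrite indep; rewrite sumr_const card_ord mulr_natl.
rewrite exchange_big /= mulr_natl -sumr_const.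
by apply: eq_bigr => sigma _; rewrite [RHS](reindex_perm sigma).
Qed.

(* Average [GGF_le] over all permutations. *)
Lemma GGF_le_mean w v : \sum_n w n = 1 -> GGF w v <= N%:R^-1 * \sum_n v n.
Proof.
move=> w1.
have SN_gt0 : (0 : R) < #|'S_N|%:R by rewrite ltr0n; apply/card_gt0P; exists 1%g.
have N_gt0R : (0 : R) < N%:R by rewrite ltr0n (gt0_of_sum_eq1 w1).
have avg : #|'S_N|%:R * GGF w v <= \sum_n w n * \sum_(sigma : 'S_N) v (sigma n).
  under [X in _ <= X]eq_bigr do rewrite mulr_sumr.
  rewrite mulr_natl -sumr_const exchange_big /=; apply: ler_sum => sigma _.
  exact: GGF_le.
rewrite -(ler_pM2l SN_gt0) (le_trans avg) // -(ler_pM2l N_gt0R) mulr_sumr.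
under eq_bigr do rewrite mulrCA sum_perm_at.
by rewrite -mulr_suml w1 mul1r mulrCA mulVKf ?gt_eqF.
Qed.

Lemma GGF_le_cst w v v' c : \sum_n w n = 1 -> (forall n, v' n = c) ->
  GGF (@utilitarian R N) v <= GGF (@utilitarian R N) v' -> GGF w v <= GGF w v'.
Proof.
move=> w1 v'c; have N_gt0 := gt0_of_sum_eq1 w1.
rewrite (GGF_cst w1 v'c) (GGF_cst (sum_utilitarian N_gt0) v'c).
by apply: le_trans; rewrite GGF_utilitarian GGF_le_mean.
Qed.

End GGF.

Section JointPermutation.
Variables (N : nat) (T : Type) (sigma : 'S_N).

Lemma permQK : cancel (fun x : {ffun 'I_N -> T} => permQ sigma x) (fun x => permQ sigma^-1 x).
Proof. by move=> x; apply/ffunP => n; rewrite /permQ !ffunE permKV. Qed.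

Lemma permQKV : cancel (fun x : {ffun 'I_N -> T} => permQ sigma^-1 x) (fun x => permQ sigma x).
Proof. by move=> x; apply/ffunP => n; rewrite /permQ !ffunE permK. Qed.

Lemma permQ_inj : injective (fun x : {ffun 'I_N -> T} => permQ sigma x).
Proof. exact: can_inj permQK. Qed.

End JointPermutation.

Lemma reindex_permQ (V : nmodType) (N : nat) (T : finType) (sigma : 'S_N)
    (F : {ffun 'I_N -> T} -> V) :
  \sum_(x : {ffun 'I_N -> T}) F x = \sum_(x : {ffun 'I_N -> T}) F (permQ sigma x).
Proof. exact: reindex_inj (@permQ_inj N T sigma). Qed.

Section JointMDP.
Variables (R : realType) (N : nat) (S A : finType) (p : S -> A -> S -> R) (gamma : R).
Hypothesis p_ge0 : forall s a s', 0 <= p s a s'.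
Hypothesis p_sum1 : forall s a, \sum_s' p s a s' = 1.
Hypothesis gamma_ge0_lt1 : 0 <= gamma < 1.

Local Notation X := (jstate N S).
Local Notation J := (jaction N A).
Implicit Types (x y : X) (a : J) (mu : X -> R) (pi : X -> J -> R) (c : X -> J -> R).

Definition is_distribution mu := (forall x, 0 <= mu x) /\ \sum_x mu x = 1.
Definition is_stochastic pi := (forall x a, 0 <= pi x a) /\ (forall x, \sum_a pi x a = 1).

Definition delta x : X -> R := fun y => (y == x)%:R.
Definition kernel pi x y : R := \sum_a pi x a * jtrans p x a y.
Definition policy_reward c pi x : R := \sum_a pi x a * c x a.

(* [exp_reward] and [value] are [expected_reward] and [total_return] for the
   joint reward [fun x a => r (x n) (a n)] of sub-MDP [n]. *)
Definition expected_reward c mu pi t : R :=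
  \sum_x \sum_a state_dist p mu pi t x * pi x a * c x a.
Definition partial_return c mu pi T : R :=
  \sum_(0 <= t < T) gamma ^+ t * expected_reward c mu pi t.
Definition total_return c mu pi : R := limn (partial_return c mu pi).
Definition value_from c pi x : R := total_return c (delta x) pi.

Lemma jtrans_ge0 x a y : 0 <= jtrans p x a y.
Proof. exact: prodr_ge0. Qed.

Lemma jtrans_sum1 x a : \sum_y jtrans p x a y = 1.
Proof.
rewrite /jtrans -(bigA_distr_bigA (fun n (s : S) => p (x n) (a n) s)) /=.
by apply: big1 => n _; rewrite p_sum1.
Qed.

Lemma sum_deltaE (F : X -> R) x : \sum_y delta x y * F y = F x.
Proof. exact: sum_eq_ind. Qed.

Lemma sum_delta_l (F : X -> R) y : \sum_x delta x y * F x = F y.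
Proof.
rewrite (bigD1 y) //= /delta eqxx mul1r big1 ?addr0 // => x.
by rewrite eq_sym => /negbTE ->; rewrite mul0r.
Qed.

Lemma delta_distribution x : is_distribution (delta x).
Proof.
split=> [y|]; first by rewrite /delta ler0n.
by have := sum_deltaE (fun _ => 1) x; under eq_bigr do rewrite mulr1.
Qed.

Lemma kernel_ge0 pi x y : is_stochastic pi -> 0 <= kernel pi x y.
Proof. by case=> pi_ge0 _; apply: sumr_ge0 => a _; rewrite mulr_ge0 ?jtrans_ge0. Qed.

Lemma kernel_sum1 pi x : is_stochastic pi -> \sum_y kernel pi x y = 1.
Proof.
case=> _ pi_sum1; rewrite /kernel exchange_big /= -(pi_sum1 x).
by apply: eq_bigr => a _; rewrite -mulr_sumr jtrans_sum1 mulr1.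
Qed.

Lemma state_distS mu pi t y : state_dist p mu pi t.+1 y =
  \sum_x \sum_a state_dist p mu pi t x * pi x a * jtrans p x a y.
Proof. by []. Qed.

Lemma state_dist_distribution mu pi t :
  is_distribution mu -> is_stochastic pi -> is_distribution (state_dist p mu pi t).
Proof.
move=> [mu_ge0 mu_sum1] pi_st; elim: t => [//|t [IH0 IH1]]; split=> [y|].
  by apply: sumr_ge0 => x _; apply: sumr_ge0 => a _; rewrite !mulr_ge0 ?jtrans_ge0 ?pi_st.1.
rewrite /= exchange_big /= -[RHS]IH1; apply: eq_bigr => x _.
rewrite exchange_big /=; under eq_bigr do rewrite -mulr_sumr jtrans_sum1 mulr1.
by rewrite -mulr_sumr pi_st.2 mulr1.
Qed.

Lemma state_dist_lin mu pi t y :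
  state_dist p mu pi t y = \sum_x mu x * state_dist p (delta x) pi t y.
Proof.
elim: t y => [|t IH] y; first by under [RHS]eq_bigr do rewrite mulrC; rewrite sum_delta_l.
rewrite state_distS; under eq_bigr do under eq_bigr do rewrite IH.
under [RHS]eq_bigr do rewrite state_distS mulr_sumr.
rewrite [RHS]exchange_big /=; apply: eq_bigr => s _.
under [RHS]eq_bigr do rewrite mulr_sumr.
rewrite [RHS]exchange_big /=; apply: eq_bigr => a _.
by rewrite !mulr_suml; apply: eq_bigr => x _; rewrite !mulrA.
Qed.

Lemma state_distSr mu pi t y :
  state_dist p mu pi t.+1 y = state_dist p (state_dist p mu pi 1) pi t y.
Proof.
elim: t y => [//|t IH] y; rewrite [LHS]state_distS [RHS]state_distS.
by do 2!apply: eq_bigr => ? _; rewrite IH.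
Qed.

Lemma state_dist1_delta pi x y : state_dist p (delta x) pi 1 y = kernel pi x y.
Proof.
rewrite /= /kernel exchange_big /=; apply: eq_bigr => a _.
by under eq_bigr do rewrite -mulrA; rewrite sum_deltaE.
Qed.

Lemma expected_reward_lin c mu pi t :
  expected_reward c mu pi t = \sum_x mu x * expected_reward c (delta x) pi t.
Proof.
rewrite /expected_reward; under eq_bigr do under eq_bigr do rewrite state_dist_lin !mulr_suml.
under [RHS]eq_bigr do rewrite mulr_sumr.
rewrite [RHS]exchange_big /=; apply: eq_bigr => s _.
under [RHS]eq_bigr do rewrite mulr_sumr.
rewrite [RHS]exchange_big /=; apply: eq_bigr => a _.
by apply: eq_bigr => x _; rewrite !mulrA.
Qed.

Lemma partial_return_lin c mu pi T :
  partial_return c mu pi T = \sum_x mu x * partial_return c (delta x) pi T.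
Proof.
rewrite /partial_return; under eq_bigr do rewrite expected_reward_lin mulr_sumr.
rewrite exchange_big /=; apply: eq_bigr => x _.
by rewrite mulr_sumr; apply: eq_bigr => t _; rewrite mulrCA.
Qed.

Lemma expected_rewardS c mu pi t :
  expected_reward c mu pi t.+1 = expected_reward c (state_dist p mu pi 1) pi t.
Proof. by do 2!apply: eq_bigr => ? _; rewrite state_distSr. Qed.

Lemma partial_returnS c pi x T :
  partial_return c (delta x) pi T.+1 =
  policy_reward c pi x + gamma * \sum_y kernel pi x y * partial_return c (delta y) pi T.
Proof.
rewrite /partial_return big_nat_recl // expr0 mul1r; congr (_ + _).
  rewrite /expected_reward /=; under eq_bigr do under eq_bigr do rewrite -mulrA.
  by under eq_bigr do rewrite -mulr_sumr; rewrite sum_deltaE.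
have shift t : expected_reward c (delta x) pi t.+1 =
    \sum_y kernel pi x y * expected_reward c (delta y) pi t.
  by rewrite expected_rewardS expected_reward_lin; under eq_bigr do rewrite state_dist1_delta.
under eq_bigr do rewrite shift mulr_sumr.
rewrite exchange_big mulr_sumr; apply: eq_bigr => y _.
rewrite mulrA mulr_sumr; apply: eq_bigr => t _.
by rewrite exprS mulrACA.
Qed.

Lemma expected_reward_bound c mu pi t : is_distribution mu -> is_stochastic pi ->
  `|expected_reward c mu pi t| <= \sum_x \sum_a `|c x a|.
Proof.
move=> mu_d pi_st; have [d_ge0 d_sum1] := state_dist_distribution t mu_d pi_st.
have [pi_ge0 pi_sum1] := pi_st.
apply: le_trans (ler_norm_sum _ _ _) _; apply: ler_sum => x _.
apply: le_trans (ler_norm_sum _ _ _) _; apply: ler_sum => a _.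
rewrite !normrM (ger0_norm (d_ge0 x)) (ger0_norm (pi_ge0 x a)).
rewrite -[X in _ <= X]mul1r; apply: ler_wpM2r => //; rewrite -[1]mul1r.
apply: ler_pM => //; first by rewrite -d_sum1 ler_sum_term.
by rewrite -(pi_sum1 x) ler_sum_term.
Qed.

Lemma partial_return_cvg c mu pi : is_distribution mu -> is_stochastic pi ->
  partial_return c mu pi T @[T --> \oo] --> total_return c mu pi.
Proof.
move=> mu_d pi_st; have [g0 g1] := andP gamma_ge0_lt1.
have bound t := expected_reward_bound c t mu_d pi_st.
suff : cvgn (series (fun t => gamma ^+ t * expected_reward c mu pi t)) by [].
apply: normed_cvg.
apply: (@series_le_cvg _ _ (geometric (\sum_x \sum_a `|c x a|) gamma)) => [t|t|t|].
- exact: normr_ge0.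
- by rewrite /geometric /= mulr_ge0 ?exprn_ge0 // (le_trans _ (bound 0%N)).
- rewrite /geometric /= normrM ger0_norm ?exprn_ge0 // mulrC.
  by apply: ler_wpM2r; rewrite ?exprn_ge0.
- by apply: is_cvg_geometric_series; rewrite ger0_norm.
Qed.

Lemma total_return_lin c mu pi : is_stochastic pi ->
  total_return c mu pi = \sum_x mu x * value_from c pi x.
Proof.
move=> pi_st; apply: cvg_lim => //; under eq_cvg do rewrite partial_return_lin.
apply: cvg_big => [|x _]; first exact: add_continuous.
exact: cvgM (cvg_cst _) (partial_return_cvg (delta_distribution x) pi_st).
Qed.

Lemma value_from_eq c pi x : is_stochastic pi -> value_from c pi x =
  policy_reward c pi x + gamma * \sum_y kernel pi x y * value_from c pi y.
Proof.
move=> pi_st; have cvg_from y := @partial_return_cvg c _ _ (delta_distribution y) pi_st.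
have cvg_next : partial_return c (delta x) pi T.+1 @[T --> \oo] --> value_from c pi x.
  by rewrite cvg_shiftS; exact: cvg_from.
suff cvg_step : partial_return c (delta x) pi T.+1 @[T --> \oo] -->
    policy_reward c pi x + gamma * \sum_y kernel pi x y * value_from c pi y.
  exact: cvg_unique cvg_next cvg_step.
under eq_cvg do rewrite partial_returnS.
apply: cvgD; first exact: cvg_cst.
apply: cvgM; first exact: cvg_cst.
apply: cvg_big => [|y _]; first exact: add_continuous.
exact: cvgM (cvg_cst _) (cvg_from y).
Qed.

Lemma le_of_kernel pi (u1 u2 : X -> R) : is_stochastic pi ->
  (forall x, u1 x - u2 x <= gamma * \sum_y kernel pi x y * (u1 y - u2 y)) ->
  forall x, u1 x <= u2 x.
Proof.
move=> pi_st sub x; rewrite -subr_le0.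
apply: (le0_of_subinvariant (P := kernel pi) (u := fun y => u1 y - u2 y) gamma_ge0_lt1) => //.
- by move=> y z; exact: kernel_ge0.
- by move=> y; exact: kernel_sum1.
Qed.

Lemma jtrans_perm (sigma : 'S_N) x a y :
  jtrans p (permQ sigma x) (permQ sigma a) (permQ sigma y) = jtrans p x a y.
Proof.
by rewrite /jtrans [RHS](reindex_perm sigma); apply: eq_bigr => n _; rewrite !ffunE.
Qed.

Lemma state_dist_perm mu pi (sigma : 'S_N) t x :
  (forall y, mu y = mu (permQ sigma y)) -> perm_invariant pi ->
  state_dist p mu pi t (permQ sigma x) = state_dist p mu pi t x.
Proof.
move=> mu_sym pi_inv; elim: t x => [|t IH] x; first by rewrite [RHS]mu_sym.
rewrite !state_distS [LHS](reindex_permQ sigma); apply: eq_bigr => y _.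
rewrite [LHS](reindex_permQ sigma); apply: eq_bigr => a _.
by rewrite IH -pi_inv jtrans_perm.
Qed.

Section Optimality.
Variables (r : S -> A -> R) (K : nat) (d : 'I_K -> A -> R) (b : 'I_K -> R).
Hypothesis b_ge0 : forall k, 0 <= b k.
Hypothesis idle : exists a0 : A, forall k, d k a0 = 0.
Implicit Types (u : X -> R) (g : X -> J).

Definition avg_reward x a : R := N%:R^-1 * \sum_n r (x n) (a n).
Definition qvalue u x a : R := avg_reward x a + gamma * \sum_y jtrans p x a y * u y.
Definition det_policy g x a : R := (a == g x)%:R.

(* [u] solves the Bellman optimality equation iff both predicates hold. *)
Definition bellman_super u := forall x a, feasible d b a -> qvalue u x a <= u x.
Definition bellman_greedy u :=
  exists g, forall x, feasible d b (g x) /\ u x = qvalue u x (g x).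

Lemma policy_stochastic pi : is_policy d b pi -> is_stochastic pi.
Proof. by case=> pi_ge0 [_ pi_sum1]. Qed.

Lemma det_policy_stochastic g : is_stochastic (det_policy g).
Proof.
split=> [x a|x]; first by rewrite /det_policy ler0n.
by have := sum_eq_ind (fun _ => 1 : R) (g x); under eq_bigr do rewrite mulr1.
Qed.

Lemma kernel_det_policy g x y : kernel (det_policy g) x y = jtrans p x (g x) y.
Proof. exact: sum_eq_ind. Qed.

Lemma sum_qvalue pi u x : \sum_a pi x a * qvalue u x a =
  policy_reward avg_reward pi x + gamma * \sum_y kernel pi x y * u y.
Proof.
rewrite /qvalue; under eq_bigr do rewrite mulrDr; rewrite big_split /=; congr (_ + _).
under eq_bigr do rewrite mulrCA mulr_sumr; rewrite -mulr_sumr; congr (gamma * _).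
rewrite exchange_big /=; apply: eq_bigr => y _.
by rewrite /kernel mulr_suml; apply: eq_bigr => a _; rewrite mulrA.
Qed.

Lemma qvalueB u1 u2 x a : qvalue u1 x a - qvalue u2 x a =
  gamma * \sum_y jtrans p x a y * (u1 y - u2 y).
Proof.
rewrite /qvalue opprD addrACA subrr add0r -mulrBr -sumrB.
by under [in RHS]eq_bigr do rewrite mulrBr.
Qed.

Lemma qvalue_le u1 u2 x a : (forall y, u1 y <= u2 y) -> qvalue u1 x a <= qvalue u2 x a.
Proof.
move=> u_le; rewrite lerD2l ler_wpM2l ?(andP gamma_ge0_lt1).1 //.
by apply: ler_sum => y _; rewrite ler_wpM2l ?jtrans_ge0.
Qed.

Lemma sum_qvalueB pi u1 u2 x :
  \sum_a pi x a * qvalue u1 x a - \sum_a pi x a * qvalue u2 x a =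
  gamma * \sum_y kernel pi x y * (u1 y - u2 y).
Proof.
rewrite !sum_qvalue opprD addrACA subrr add0r -mulrBr -sumrB.
by under [in RHS]eq_bigr do rewrite mulrBr.
Qed.

Lemma value_qvalue pi x : is_stochastic pi ->
  value_from avg_reward pi x = \sum_a pi x a * qvalue (value_from avg_reward pi) x a.
Proof. by move=> pi_st; rewrite sum_qvalue -value_from_eq. Qed.

Lemma value_det_policy g x : value_from avg_reward (det_policy g) x =
  qvalue (value_from avg_reward (det_policy g)) x (g x).
Proof. rewrite [LHS]value_qvalue; [exact: sum_eq_ind | exact: det_policy_stochastic]. Qed.

Lemma value_eq_of_fixpoint pi u : is_stochastic pi ->
  (forall x, u x = \sum_a pi x a * qvalue u x a) ->
  forall x, value_from avg_reward pi x = u x.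
Proof.
move=> pi_st u_fix x; apply/le_anti/andP; split; apply: (le_of_kernel pi_st) => y.
  by rewrite [X in X - _](value_qvalue _ pi_st) [X in _ - X]u_fix sum_qvalueB.
by rewrite [X in X - _]u_fix [X in _ - X](value_qvalue _ pi_st) sum_qvalueB.
Qed.

Lemma bellman_greedy_le u1 u2 : bellman_greedy u1 -> bellman_super u2 ->
  forall x, u1 x <= u2 x.
Proof.
move=> [g g_greedy] u2_super; apply: (le_of_kernel (det_policy_stochastic g)) => x.
have [g_feas u1_eq] := g_greedy x; rewrite [X in X - _]u1_eq.
apply: le_trans (lerB (lexx _) (u2_super x (g x) g_feas)) _.
by rewrite qvalueB; under [X in _ <= _ * X]eq_bigr do rewrite kernel_det_policy.
Qed.

Lemma value_le_bellman_super u pi : bellman_super u -> is_policy d b pi ->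
  forall x, value_from avg_reward pi x <= u x.
Proof.
move=> u_super pi_pol; have pi_st := policy_stochastic pi_pol.
have [pi_ge0 [pi_feas pi_sum1]] := pi_pol.
apply: (le_of_kernel pi_st) => x.
have mean_le : \sum_a pi x a * qvalue u x a <= u x.
  rewrite -[X in _ <= X]mul1r -(pi_sum1 x) mulr_suml; apply: ler_sum => a _.
  have [a_feas|a_infeas] := boolP (feasible d b a).
    by apply: ler_wpM2l => //; exact: u_super.
  by rewrite pi_feas // !mul0r.
rewrite [X in X - _](value_qvalue _ pi_st).
by apply: le_trans (lerB (lexx _) mean_le) _; rewrite sum_qvalueB.
Qed.

Lemma policy_improvement u g x :
  (forall y, u y <= qvalue u y (g y)) -> u x < qvalue u x (g x) ->
  \sum_y u y < \sum_y value_from avg_reward (det_policy g) y.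
Proof.
set v := value_from avg_reward (det_policy g) => improves improves_x.
have u_le_v : forall y, u y <= v y.
  apply: (le_of_kernel (det_policy_stochastic g)) => y.
  rewrite [X in _ - X]value_det_policy; apply: le_trans (lerB (improves y) (lexx _)) _.
  by rewrite qvalueB; under [X in _ <= _ * X]eq_bigr do rewrite kernel_det_policy.
have u_lt_v : u x < v x.
  by rewrite [v x]value_det_policy; apply: lt_le_trans improves_x (qvalue_le _ _ u_le_v).
rewrite (bigD1 x) //= [X in _ < X](bigD1 x) //=.
by apply: ltr_leD u_lt_v _; apply: ler_sum => y _.
Qed.

(* Policy iteration in one step: the value of a deterministic feasible policy
   maximizing the total value over all states cannot be improved. *)
Lemma bellman_solution_exists : exists u, bellman_super u /\ bellman_greedy u.
Proof.
have [a0 a0_idle] := idle.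
pose feasible_rule := [pred g : {ffun X -> J} | [forall x, feasible d b (g x)]].
pose total (g : {ffun X -> J}) := \sum_x value_from avg_reward (det_policy g) x.
have idle_feasible : feasible_rule [ffun _ => [ffun _ => a0]].
  apply/forallP => x; apply/forallP => k; rewrite big1 ?b_ge0 // => n _.
  by rewrite !ffunE a0_idle.
case: (arg_maxP total idle_feasible) => g g_feas g_max.
set u := value_from avg_reward (det_policy g).
exists u; split; last first.
  by exists g => x; split; [exact: (forallP g_feas x) | exact: value_det_policy].
move=> x a a_feas; rewrite leNgt; apply/negP => u_lt.
pose g' := [ffun y => if y == x then a else g y].
have g'_feas : feasible_rule g'.
  by apply/forallP => y; rewrite ffunE; case: (y == x) => //; exact: (forallP g_feas y).
have improves y : u y <= qvalue u y (g' y).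
  by rewrite ffunE; case: eqP => [->|_]; [exact: ltW | rewrite -value_det_policy].
have strict : u x < qvalue u x (g' x) by rewrite ffunE eqxx.
by move: (policy_improvement improves strict) => /lt_le_trans/(_ (g_max g' g'_feas)); rewrite ltxx.
Qed.

Lemma avg_reward_perm (sigma : 'S_N) x a :
  avg_reward (permQ sigma x) (permQ sigma a) = avg_reward x a.
Proof.
rewrite /avg_reward [in RHS](reindex_perm sigma).
by congr (_ * _); apply: eq_bigr => n _; rewrite !ffunE.
Qed.

Lemma feasible_perm (sigma : 'S_N) a : feasible d b (permQ sigma a) = feasible d b a.
Proof.
apply: eq_forallb => k; rewrite [X in _ = (X <= _)](reindex_perm sigma).
by congr (_ <= _); apply: eq_bigr => n _; rewrite !ffunE.
Qed.

Lemma qvalue_perm u (sigma : 'S_N) x a :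
  qvalue (fun y => u (permQ sigma y)) x a = qvalue u (permQ sigma x) (permQ sigma a).
Proof.
rewrite /qvalue avg_reward_perm [in RHS](reindex_permQ sigma).
by congr (_ + gamma * _); apply: eq_bigr => y _; rewrite jtrans_perm.
Qed.

Lemma bellman_super_perm u (sigma : 'S_N) :
  bellman_super u -> bellman_super (fun y => u (permQ sigma y)).
Proof. by move=> u_super x a a_feas; rewrite qvalue_perm u_super ?feasible_perm. Qed.

Lemma bellman_greedy_perm u (sigma : 'S_N) :
  bellman_greedy u -> bellman_greedy (fun y => u (permQ sigma y)).
Proof.
move=> [g g_greedy]; exists (fun x => permQ sigma^-1 (g (permQ sigma x))) => x.
have [g_feas u_eq] := g_greedy (permQ sigma x).
by rewrite feasible_perm qvalue_perm permQKV.
Qed.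

(* The Bellman solution is unique, and the problem is symmetric. *)
Lemma bellman_solution_sym u : bellman_super u -> bellman_greedy u ->
  forall (sigma : 'S_N) x, u (permQ sigma x) = u x.
Proof.
move=> u_super u_greedy sigma x; apply/le_anti/andP; split.
  exact: bellman_greedy_le (bellman_greedy_perm sigma u_greedy) u_super x.
exact: bellman_greedy_le u_greedy (bellman_super_perm sigma u_super) x.
Qed.

Definition greedy u x a : bool := feasible d b a && (qvalue u x a == u x).

(* Uniform over all greedy actions, so that a symmetric [u] yields a
   permutation-invariant policy. *)
Definition greedy_policy u x a : R :=
  (greedy u x a)%:R / \sum_(a' : J) (greedy u x a')%:R.

Lemma greedy_count_gt0 u x : bellman_greedy u -> (0 : R) < \sum_a (greedy u x a)%:R.
Proof.
move=> [g g_greedy]; have [g_feas u_eq] := g_greedy x.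
apply: lt_le_trans (ler_sum_term (F := fun a => (greedy u x a)%:R) (g x) (fun _ => ler0n _ _)).
by rewrite /greedy g_feas -u_eq eqxx ltr01.
Qed.

Lemma greedy_policy_is_policy u : bellman_greedy u -> is_policy d b (greedy_policy u).
Proof.
move=> u_greedy; split; [|split].
- by move=> x a; rewrite divr_ge0 ?ler0n // ltW // greedy_count_gt0.
- by move=> x a a_infeas; rewrite /greedy_policy /greedy (negbTE a_infeas) mul0r.
- by move=> x; rewrite -mulr_suml mulfV // gt_eqF // greedy_count_gt0.
Qed.

Lemma greedy_policy_fixpoint u : bellman_greedy u ->
  forall x, u x = \sum_a greedy_policy u x a * qvalue u x a.
Proof.
move=> u_greedy x; have [_ [_ pi_sum1]] := greedy_policy_is_policy u_greedy.
rewrite -[LHS]mul1r -(pi_sum1 x) mulr_suml; apply: eq_bigr => a _.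
rewrite /greedy_policy; case: (boolP (greedy u x a)) => [/andP[_ /eqP ->] //|_].
by rewrite !mul0r.
Qed.

Lemma greedy_policy_perm_invariant u :
  (forall (sigma : 'S_N) x, u (permQ sigma x) = u x) -> perm_invariant (greedy_policy u).
Proof.
move=> u_sym sigma x a.
have u_perm : (fun y => u (permQ sigma y)) = u by apply: funext => y; exact: u_sym.
have greedy_perm y a' : greedy u (permQ sigma y) (permQ sigma a') = greedy u y a'.
  by rewrite /greedy feasible_perm -qvalue_perm u_perm u_sym.
rewrite /greedy_policy greedy_perm [in RHS](reindex_permQ sigma).
by under [in RHS]eq_bigr do rewrite greedy_perm.
Qed.

Lemma expected_reward_avg mu pi t : expected_reward avg_reward mu pi t =
  \sum_n N%:R^-1 * exp_reward p r mu pi t n.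
Proof.
rewrite /expected_reward /exp_reward /avg_reward.
under eq_bigr do under eq_bigr do rewrite mulrCA !mulr_sumr.
under [RHS]eq_bigr do rewrite mulr_sumr.
under [RHS]eq_bigr do under eq_bigr do rewrite mulr_sumr.
rewrite [RHS]exchange_big /=; apply: eq_bigr => x _.
rewrite [RHS]exchange_big /=; apply: eq_bigr => a _.
by apply: eq_bigr => n _; rewrite !mulrA.
Qed.

Lemma total_return_avg mu pi : is_distribution mu -> is_stochastic pi ->
  total_return avg_reward mu pi = N%:R^-1 * \sum_n value p r mu gamma pi n.
Proof.
move=> mu_d pi_st; apply: cvg_lim => //; rewrite mulr_sumr.
have -> : partial_return avg_reward mu pi = fun T =>
    \sum_n N%:R^-1 * partial_return (fun x a => r (x n) (a n)) mu pi T.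
  apply: funext => T; rewrite /partial_return.
  under eq_bigr do rewrite expected_reward_avg mulr_sumr.
  rewrite exchange_big /=; apply: eq_bigr => n _.
  by rewrite mulr_sumr; apply: eq_bigr => t _; rewrite mulrCA.
apply: cvg_big => [|n _]; first exact: add_continuous.
apply: cvgM; [exact: cvg_cst | exact: partial_return_cvg].
Qed.

Lemma value_perm_invariant mu pi : (forall (sigma : 'S_N) x, mu x = mu (permQ sigma x)) ->
  perm_invariant pi -> forall n m, value p r mu gamma pi n = value p r mu gamma pi m.
Proof.
move=> mu_sym pi_inv n m.
have reward_perm (sigma : 'S_N) t k : exp_reward p r mu pi t (sigma k) = exp_reward p r mu pi t k.
  rewrite /exp_reward [RHS](reindex_permQ sigma); apply: eq_bigr => x _.
  rewrite [RHS](reindex_permQ sigma); apply: eq_bigr => a _.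
  by rewrite state_dist_perm // -pi_inv !ffunE.
rewrite -(tpermL n m) /value; congr (limn _); apply: funext => T.
by apply: eq_bigr => t _; rewrite reward_perm.
Qed.

Lemma utilitarian_optimal_perm_invariant_exists mu : is_distribution mu ->
  (forall (sigma : 'S_N) x, mu x = mu (permQ sigma x)) ->
  exists pi, [/\ is_policy d b pi, perm_invariant pi &
    forall pi', is_policy d b pi' ->
      GGF (@utilitarian R N) (value p r mu gamma pi') <=
      GGF (@utilitarian R N) (value p r mu gamma pi)].
Proof.
move=> mu_d mu_sym; have [u [u_super u_greedy]] := bellman_solution_exists.
have pi_pol := greedy_policy_is_policy u_greedy.
have pi_st := policy_stochastic pi_pol.
exists (greedy_policy u); split => //.
  exact/greedy_policy_perm_invariant/bellman_solution_sym.
move=> pi' pi'_pol; have pi'_st := policy_stochastic pi'_pol.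
rewrite !GGF_utilitarian -!total_return_avg // !total_return_lin //.
apply: ler_sum => x _; rewrite ler_wpM2l ?mu_d.1 //.
rewrite (value_eq_of_fixpoint pi_st (greedy_policy_fixpoint u_greedy)).
exact: value_le_bellman_super.
Qed.

End Optimality.

End JointMDP.

Theorem theorem3p2 (R : realType) (N K : nat) (S A : finType)
  (p : S -> A -> S -> R) (r : S -> A -> R)
  (d : 'I_K -> A -> R) (b : 'I_K -> R)
  (mu : jstate N S -> R) (gamma : R)
  (hp_nonneg : forall s a s', 0 <= p s a s')
  (hp_sum : forall s a, \sum_(s' : S) p s a s' = 1)
  (hd : forall k a, 0 <= d k a) (hb : forall k, 0 <= b k)
  (hidle : exists a0 : A, forall k, d k a0 = 0)
  (hmu_nonneg : forall s, 0 <= mu s)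
  (hmu_sum : \sum_(s : jstate N S) mu s = 1)
  (hmu_sym : forall (sigma : 'S_N) (s : jstate N S), mu s = mu (permQ sigma s))
  (hgamma : 0 <= gamma < 1) :
  let V := value p r mu gamma in
  let opt_PI := fun pi : jstate N S -> jaction N A -> R =>
    [/\ is_policy d b pi, perm_invariant pi &
        forall pi' : jstate N S -> jaction N A -> R, is_policy d b pi' ->
          GGF (@utilitarian R N) (V pi') <= GGF (@utilitarian R N) (V pi)] in
  (exists pi, opt_PI pi) /\
  (forall pistar, opt_PI pistar ->
     forall w : 'I_N -> R, gini_weights w ->
       forall pi : jstate N S -> jaction N A -> R, is_policy d b pi -> GGF w (V pi) <= GGF w (V pistar)).
Proof.
move=> V opt_PI; split.
  exact: (utilitarian_optimal_perm_invariant_exists hp_nonneg hp_sum hgamma r hb hidle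
    (conj hmu_nonneg hmu_sum) hmu_sym).
move=> pistar [_ pistar_inv pistar_opt] w [_ [w_sum1 _]] pi pi_pol.
have N_gt0 := gt0_of_sum_eq1 w_sum1.
apply: (GGF_le_cst w_sum1 (c := V pistar (Ordinal N_gt0))) (pistar_opt pi pi_pol) => n.
exact: value_perm_invariant.
Qed.
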